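(* Let $n\ge 1$, let $\mathcal{D}\subseteq\mathbb{R}^{2n+1}$ be open and let $F:\mathcal{D}\to\mathbb{R}$ be twice continuously differentiable. Write $\theta=(\mathbf{c},\mathbf{b})$ with $\mathbf{c}\in\mathbb{R}^{n+1}$, $\mathbf{b}\in\mathbb{R}^n$, and partition the Hessian as $$\nabla^2_\theta F(\theta)=\begin{pmatrix}\mathcal{H}_{11}(\theta)&\mathcal{H}_{12}(\theta)\\ \mathcal{H}_{21}(\theta)&\mathcal{H}_{22}(\theta)\end{pmatrix},\quad \mathcal{H}_{11}=\nabla^2_{\mathbf{c}\mathbf{c}}F,\ \mathcal{H}_{12}=\nabla^2_{\mathbf{c}\mathbf{b}}F,\ \mathcal{H}_{21}=\nabla^2_{\mathbf{b}\mathbf{c}}F,\ \mathcal{H}_{22}=\nabla^2_{\mathbf{b}\mathbf{b}}F.$$ Let $\mathcal{O}\subseteq\mathcal{D}$ be an open set on which the invertibility assumption holds for the chosen scheme, and let $G=(G_1,G_2):\mathcal{O}\to\mathbb{R}^{2n+1}$ be the block Newton map of either the L-GS or the NL-GS scheme (defined in the context). Let $\theta^*\in\mathcal{O}$ be a fixed point of $G$ and assume that $\nabla^2_\theta F(\theta^* )$ is symmetric positive definite. Then $G$ is differentiable at $\theta^*$ with Jacobian $$\mathbf{J}_G(\theta^* )=I_{2n+1}-B(\theta^* )^{-1}\nabla^2_\theta F(\theta^* ),\qquad B(\theta)=\begin{pmatrix}\mathcal{H}_{11}(\theta)&\mathbf{0}\\ \mathcal{H}_{21}(\theta)&\mathc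al{H}_{22}(\theta)\end{pmatrix}.$$
   Context: Block Newton maps. For $\theta=(\mathbf{c},\mathbf{b})$ define $G_1(\theta)=\mathbf{c}-\mathcal{H}_{11}(\theta)^{-1}\nabla_{\mathbf{c}}F(\theta)$. For the NL-GS (block nonlinear Gauss–Seidel) scheme, $G_2(\theta)=\mathbf{b}-\mathcal{H}_{22}(G_1(\theta),\mathbf{b})^{-1}\nabla_{\mathbf{b}}F(G_1(\theta),\mathbf{b})$. For the L-GS (block linear Gauss–Seidel) scheme, $G_2(\theta)=\mathbf{b}-\mathcal{H}_{22}(\theta)^{-1}\big(\nabla_{\mathbf{b}}F(\theta)+\mathcal{H}_{21}(\theta)(G_1(\theta)-\mathbf{c})\big)$. Then $G(\theta)=(G_1(\theta),G_2(\theta))$. Invertibility assumption on $\mathcal{O}$: for every $\theta=(\mathbf{c},\mathbf{b})\in\mathcal{O}$, $\mathcal{H}_{11}(\theta)$ is invertible, and moreover $\mathcal{H}_{22}(G_1(\theta),\mathbf{b})$ is invertible (with $(G_1(\theta),\mathbf{b})\in\mathcal{D}$) for NL-GS, respectively $\mathcal{H}_{22}(\theta)$ is invertible for L-GS. $I_{2n+1}$ is the identity matrix of order $2n+1$. *)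

(* Column vectors 'cV[R]_(n.+1 + n), theta = col_mx c b. *)
From HB Require Import structures.
From mathcomp Require Import all_boot all_order all_algebra.
From mathcomp Require Import all_classical all_reals all_analysis.
Set Implicit Arguments. Unset Strict Implicit. Unset Printing Implicit Defensive.
Import Order.TTheory GRing.Theory Num.Theory.
Import numFieldNormedType.Exports.
Local Open Scope classical_set_scope.
Local Open Scope ring_scope.

Section Defs.
Variables (R : realType) (n : nat).
Local Notation V := 'cV[R]_(n.+1 + n).

Definition ebasis (i : 'I_(n.+1 + n)) : V := delta_mx i 0.

Definition partial (i : 'I_(n.+1 + n)) (F : V -> R) : V -> R :=
  fun x => 'D_(ebasis i) F x.

Definition C2_on (D : set V) (F : V -> R) : Prop :=
  (forall x, D x -> differentiable F x) /\
  (forall i x, D x -> differentiable (partial i F) x) /\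
  (forall i j x, D x -> {for x, continuous (partial j (partial i F))}).

Definition grad (F : V -> R) (x : V) : V := \col_i partial i F x.
Definition hessian (F : V -> R) (x : V) : 'M[R]_(n.+1 + n) :=
  \matrix_(i, j) partial j (partial i F) x.

Definition gradc F x : 'cV[R]_(n.+1) := usubmx (grad F x).
Definition gradb F x : 'cV[R]_n := dsubmx (grad F x).
Definition H11 F x : 'M[R]_(n.+1) := ulsubmx (hessian F x).
Definition H12 F x : 'M[R]_(n.+1, n) := ursubmx (hessian F x).
Definition H21 F x : 'M[R]_(n, n.+1) := dlsubmx (hessian F x).
Definition H22 F x : 'M[R]_n := drsubmx (hessian F x).

Definition Bmat F x : 'M[R]_(n.+1 + n) := block_mx (H11 F x) 0 (H21 F x) (H22 F x).

Inductive scheme := LGS | NLGS.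

Definition G1 F (th : V) : 'cV[R]_(n.+1) :=
  usubmx th - invmx (H11 F th) *m gradc F th.

Definition G2 (s : scheme) F (th : V) : 'cV[R]_n :=
  let c := usubmx th in let b := dsubmx th in
  match s with
  | NLGS => b - invmx (H22 F (col_mx (G1 F th) b)) *m gradb F (col_mx (G1 F th) b)
  | LGS => b - invmx (H22 F th) *m (gradb F th + H21 F th *m (G1 F th - c))
  end.

Definition Gmap (s : scheme) F (th : V) : V := col_mx (G1 F th) (G2 s F th).

Definition invertibility (s : scheme) (D O : set V) F : Prop :=
  forall th, O th ->
    H11 F th \in unitmx /\
    match s with
    | NLGS => D (col_mx (G1 F th) (dsubmx th)) /\
              H22 F (col_mx (G1 F th) (dsubmx th)) \in unitmx
    | LGS => H22 F th \in unitmx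
    end.

Definition sym_pos_def (m : nat) (A : 'M[R]_m) : Prop :=
  A^T = A /\ forall v : 'cV[R]_m, v != 0 -> 0 < (v^T *m A *m v) 0 0.

End Defs.

From HB Require Import structures.
From mathcomp Require Import all_boot all_order all_algebra.
From mathcomp Require Import all_classical all_reals all_analysis.
From mathcomp Require Import perm ring.
Import Order.TTheory GRing.Theory Num.Theory.
Import numFieldNormedType.Exports.
Local Open Scope classical_set_scope.
Local Open Scope ring_scope.

(* At a fixed point theta* of G each block Newton step leaves its block
   unchanged, so the invertibility of H11 and H22 forces grad F (theta* ) = 0.
   Every component of G then has the form y |-> P y - A y * r y with P linear,
   A y the inverse of a Hessian block (merely continuous) and r a residual that
   vanishes at theta*.  Such a product is still differentiable at theta*, with
   derivative A theta* * r', because (A y - A theta* ) * r y is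
   o(1) * O(|y - theta*|).
   The nonlinear scheme evaluates the b-block at (G1 y, b) instead of y, which
   adds H21 (G1' h - h_c) to the residual derivative: exactly the correction
   term of the linear scheme, so both schemes have the same Jacobian.  Finally
   (I - J_G) h arises from D^2 F h by forward substitution in the block
   lower-triangular system B k = D^2 F h. *)

Section block_algebra.
Context {R : comUnitRingType}.

Lemma fixed_newton_step0 {m p : nat} {M : 'M[R]_m} {b v : 'M[R]_(m, p)} :
  M \in unitmx -> b - invmx M *m v = b -> v = 0.
Proof.
move=> uM /eqP; rewrite subr_eq addrC -subr_eq subrr eq_sym => /eqP Mv0.
by rewrite -(mulKVmx uM v) Mv0 mulmx0.
Qed.

Lemma dsubmx_mul_col_mx {m1 m2 k p q : nat} (M : 'M[R]_(m1 + m2, k + p))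
    (a : 'M[R]_(k, q)) (b : 'M[R]_(p, q)) :
  dsubmx (M *m col_mx a b) = dlsubmx M *m a + drsubmx M *m b.
Proof. by rewrite -{1}(submxK M) mul_block_col col_mxKd. Qed.

Lemma invmx_block_lower_mul {m1 m2 p : nat} (A : 'M[R]_m1) (C : 'M[R]_(m2, m1))
    (D : 'M[R]_m2) (y : 'M[R]_(m1, p)) (z : 'M[R]_(m2, p)) :
  A \in unitmx -> D \in unitmx ->
  invmx (block_mx A 0 C D) *m col_mx y z =
  col_mx (invmx A *m y) (invmx D *m (z - C *m (invmx A *m y))).
Proof.
move=> uA uD; have uB : block_mx A 0 C D \in unitmx.
  by rewrite unitmxE det_lblock unitrM -!unitmxE uA uD.
apply: (canLR (mulKmx uB)).
by rewrite mul_block_col mul0mx addr0 !mulKVmx // addrC subrK.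
Qed.

End block_algebra.

Section matrix_continuity.
Context {R : realType}.

Lemma cvg_mx_entries {T} {F : set_system T} {FF : Filter F} m p
    (f : T -> 'M[R]_(m, p)) (l : 'M[R]_(m, p)) :
  (forall i j, f t i j @[t --> F] --> l i j) -> f @ F --> l.
Proof.
move=> fl; apply/cvgrPdist_le => e e0; near=> t.
rewrite /Num.Def.normr/= mx_normrE (bigmax_le _ (ltW e0))//= => ij _.
rewrite !mxE /=; move: ij; near: t; apply: filter_forall => ij.
exact: ((cvgrPdist_le _ _).1 (fl ij.1 ij.2) e e0).
Unshelve. all: by end_near. Qed.

Lemma linear_mx_continuous {m p : nat} {W : normedModType R}
    (L : {linear 'M[R]_(m, p) -> W}) : continuous L.
Proof.
have -> : L = (fun M => \sum_i \sum_j M i j *: L (delta_mx i j)) :> (_ -> _).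
  apply/funext => M; rewrite [in LHS](matrix_sum_delta M) !linear_sum.
  by apply: eq_bigr => i _; rewrite linear_sum; apply: eq_bigr => j _; rewrite linearZ.
apply: continuous_big => [|i _]; first exact: add_continuous.
apply: continuous_big => [|j _]; first exact: add_continuous.
move=> M; exact: cvgZr_tmp (@coord_continuous R m p i j M).
Qed.

Lemma continuous_ulsubmx {m1 m2 n1 n2 : nat} : continuous (@ulsubmx R m1 m2 n1 n2).
Proof.
by move=> M; apply: (continuous_comp (f := usubmx)); apply: linear_mx_continuous.
Qed.

Lemma continuous_dlsubmx {m1 m2 n1 n2 : nat} : continuous (@dlsubmx R m1 m2 n1 n2).
Proof.
by move=> M; apply: (continuous_comp (f := dsubmx)); apply: linear_mx_continuous.
Qed.

Lemma continuous_drsubmx {m1 m2 n1 n2 : nat} : continuous (@drsubmx R m1 m2 n1 n2).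
Proof.
by move=> M; apply: (continuous_comp (f := dsubmx)); apply: linear_mx_continuous.
Qed.

Lemma continuous_det m : continuous (@determinant R m).
Proof.
apply: continuous_big => [|s _]; first exact: add_continuous.
have : continuous (fun M : 'M[R]_m => \prod_i M i ((s : 'S_m) i)).
  by apply: continuous_big => [|i _]; [exact: mul_continuous|exact: coord_continuous].
by move=> + M => /(_ M) /cvgMl_tmp; apply.
Qed.

Lemma continuous_adj m : continuous (@adjugate R m).
Proof.
move=> M; apply: (cvg_mx_entries (F := nbhs M)) => i j; rewrite mxE.
under eq_cvg do rewrite mxE.
apply: cvgMl_tmp; apply: (continuous_comp (f := row' j \o col' i)).
  by apply: continuous_comp; apply: linear_mx_continuous.
exact: continuous_det.
Qed.

Lemma continuous_invmx m (M : 'M[R]_m) :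
  M \in unitmx -> {for M, continuous (@invmx R m)}.
Proof.
move=> uM; have detM0 : \det M != 0 by rewrite -unitfE -unitmxE.
have near_unit : \forall N \near M, N \in unitmx.
  have := (cvgrPdist_lt _ _).1 (@continuous_det m M) `|\det M|.
  rewrite normr_gt0 => /(_ _ detM0); apply: filterS => N.
  by rewrite unitmxE unitfE; apply: contraTneq => ->; rewrite subr0 ltxx.
have invmxE : {near M, (fun N => (\det N)^-1 *: \adj N) =1 invmx}.
  by apply: filterS near_unit => N uN; rewrite /invmx uN.
apply: cvg_trans (near_eq_cvg invmxE) _; rewrite /invmx uM.
exact: cvgZ (cvgV detM0 (@continuous_det m M)) (@continuous_adj m M).
Qed.

End matrix_continuity.

Section matrix_differential.
Context {R : realType} {V : normedModType R}.

Lemma normr_mulmx_le {p q r : nat} (A : 'M[R]_(p, q)) (B : 'M[R]_(q, r)) :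
  `|A *m B| <= q%:R * (`|A| * `|B|).
Proof.
have entry_le m k (M : 'M[R]_(m, k)) i j : `|M i j| <= `|M|.
  rewrite [leRHS]/Num.Def.normr /= mx_normrE.
  exact: (le_bigmax _ (fun ij : 'I_m * 'I_k => `|M ij.1 ij.2|) (i, j)).
rewrite [leLHS]/Num.Def.normr /= mx_normrE.
apply: bigmax_le => [|[i j] _]; first by rewrite !mulr_ge0.
rewrite mxE /= (le_trans (ler_norm_sum _ _ _))//.
apply: (@le_trans _ _ (\sum_(k < q) `|A| * `|B|)).
  by apply: ler_sum => k _; rewrite normrM ler_pM.
by rewrite sumr_const card_ord mulr_natl.
Qed.

Lemma is_diff_linear_mx {m p : nat} {W : normedModType R}
    (L : {linear 'M[R]_(m, p) -> W}) {f df : V -> 'M[R]_(m, p)} {x : V} :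
  is_diff x f df -> is_diff x (fun y => L (f y)) (fun h => L (df h)).
Proof.
have cL := linear_mx_continuous L.
have dL : is_diff (f x) L L.
  by apply: DiffDef; [exact: linear_differentiable|exact: diff_lin].
by move=> dfx; exact: is_diff_comp dfx dL.
Qed.

Lemma is_diff_col_mx {m1 m2 r : nat} {f df : V -> 'M[R]_(m1, r)}
    {g dg : V -> 'M[R]_(m2, r)} {x : V} :
  is_diff x f df -> is_diff x g dg ->
  is_diff x (fun y => col_mx (f y) (g y)) (fun h => col_mx (df h) (dg h)).
Proof.
have col_mxE (a : 'M[R]_(m1, r)) b :
    col_mx a b = col_mx 1%:M 0 *m a + col_mx 0 1%:M *m b.
  by rewrite !mul_col_mx !mul1mx !mul0mx add_col_mx addr0 add0r.
move=> dfx dgx.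
have -> : (fun y => col_mx (f y) (g y)) =
    (fun y => col_mx 1%:M 0 *m f y) + (fun y => col_mx 0 1%:M *m g y).
  by apply/funext => y; rewrite col_mxE.
have -> : (fun h => col_mx (df h) (dg h)) =
    (fun h => col_mx 1%:M 0 *m df h) + (fun h => col_mx 0 1%:M *m dg h).
  by apply/funext => h; rewrite col_mxE.
exact: is_diffD (is_diff_linear_mx (mulmx _) dfx) (is_diff_linear_mx (mulmx _) dgx).
Qed.

Lemma is_diff_sum (W : normedModType R) (I : finType) (f df : I -> V -> W) x :
  (forall i, is_diff x (f i) (df i)) ->
  is_diff x (fun y => \sum_i f i y) (fun h => \sum_i df i h).
Proof.
move=> dfx; rewrite -!fct_sumE.
elim/big_ind2 : _ => [|f1 df1 f2 df2|i _]; first exact: is_diff_cst.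
  exact: is_diffD.
exact: dfx.
Qed.

Lemma is_diff_mx {m p : nat} (f : V -> 'M[R]_(m, p)) (x : V) :
  (forall i j, differentiable (fun y => f y i j) x) ->
  is_diff x f (fun h => \matrix_(i, j) 'd (fun y => f y i j) x h).
Proof.
move=> dfx.
have fE : f = fun y => \sum_i \sum_j f y i j *: delta_mx i j.
  by apply/funext => y; exact: matrix_sum_delta.
have dfE : (fun h => \matrix_(i, j) 'd (fun y => f y i j) x h) =
    fun h => \sum_i \sum_j 'd (fun y => f y i j) x h *: delta_mx i j.
  apply/funext => h; rewrite [LHS]matrix_sum_delta.
  by under eq_bigr do under eq_bigr do rewrite mxE.
rewrite dfE {1}fE; apply: is_diff_sum => i; apply: is_diff_sum => j.
by apply: DiffDef; [exact: differentiableZl|exact: diffZl].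
Qed.

Lemma littleo_is_diff0 {W : normedModType R} (r : V -> W) (x : V) : r x = 0 ->
  (forall e, 0 < e -> \forall h \near 0, `|r (h + x)| <= e * `|h|) ->
  is_diff x r 0.
Proof.
move=> rx0 small.
have r_littleo : r \o shift x = cst (r x) + \0 +o_ 0 id.
  apply/eqaddoP => e e0; apply: filterS (small e e0) => h.
  by rewrite /= rx0 !addr0 subr0.
have c0 : continuous (\0 : {linear V -> W}) by move=> ?; exact: cvg_cst.
have dr0 := diff_unique c0 r_littleo.
by apply: DiffDef => //; apply/diff_locallyP; rewrite dr0.
Qed.

Lemma differentiable_vanishing_bound {W : normedModType R} (g : V -> W) (x : V) :
  differentiable g x -> g x = 0 ->
  exists2 k, 0 < k & \forall h \near 0, `|g (h + x)| <= k * `|h|.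
Proof.
move=> dg gx0; have [k k0 dg_le] := linear_lipschitz (diff_continuous dg).
exists (k + 1); first by rewrite addr_gt0.
move/eqaddoP: (diff_locally dg) => /(_ 1 ltr01); apply: filterS => h /=.
rewrite gx0 add0r mul1r mulrDl mul1r => g_dg_le.
rewrite -[g _](subrK ('d g x h)) addrC.
exact: le_trans (ler_normD _ _) (lerD (dg_le h) g_dg_le).
Qed.

Lemma is_diff_mulmx_vanishing {p q r : nat} {A : V -> 'M[R]_(p, q)}
    {g dg : V -> 'M[R]_(q, r)} {x : V} :
  {for x, continuous A} -> is_diff x g dg -> g x = 0 ->
  is_diff x (fun y => A y *m g y) (fun h => A x *m dg h).
Proof.
move=> cA dgx gx0.
have -> : (fun y => A y *m g y) = (fun y => A x *m g y) + (fun y => (A y - A x) *m g y).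
  by apply/funext => y; rewrite !fctE mulmxBl addrC subrK.
suff d0 : is_diff x (fun y => (A y - A x) *m g y) 0.
  by have := is_diffD (is_diff_linear_mx (mulmx (A x)) dgx) d0; rewrite addr0.
apply: littleo_is_diff0 => [|e e0]; first by rewrite subrr mul0mx.
have [k k0 g_le] := differentiable_vanishing_bound g x ex_diff gx0.
pose eps := e / (q.+1%:R * k).
have eps0 : 0 < eps by rewrite divr_gt0 // mulr_gt0.
have A_near : \forall h \near 0, `|A (h + x) - A x| <= eps.
  have A_near_x : \forall y \near x, `|A x - A y| <= eps.
    exact: (cvgrPdist_le _ _).1 cA eps eps0.
  by apply: filterS ((nbhs0P _ x).1 A_near_x) => h; rewrite distrC [x + h]addrC.
near=> h; apply: le_trans (normr_mulmx_le _ _) _.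
have -> : e * `|h| = q.+1%:R * (eps * (k * `|h|)).
  by rewrite /eps; field; rewrite nat1r !gt_eqF.
apply: ler_pM; rewrite ?mulr_ge0 ?ler_nat //.
apply: ler_pM => //; near: h; [exact: A_near|exact: g_le].
Unshelve. all: by end_near. Qed.

End matrix_differential.

Section gradient.
Context {R : realType} {n : nat}.
Local Notation V := 'cV[R]_(n.+1 + n).

Lemma diff_partialE (k : V -> R) (y h : V) : differentiable k y ->
  'd k y h = \sum_j h j 0 * partial j k y.
Proof.
move=> dk; rewrite {1}(matrix_sum_delta h) linear_sum.
apply: eq_bigr => j _; rewrite big_ord1 linearZ /=.
by rewrite /partial deriveE.
Qed.

Lemma is_diff_grad (F : V -> R) (y : V) :
  (forall i, differentiable (partial i F) y) ->
  is_diff y (grad F) (fun h => hessian F y *m h).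
Proof.
move=> dF; have gradE i j : (fun z => grad F z i j) = partial i F.
  by apply/funext => z; rewrite mxE.
apply: is_diff_eq (is_diff_mx (grad F) y _) _ => [i j|]; first by rewrite gradE.
apply/funext => h; apply/matrixP => i j; rewrite !mxE gradE diff_partialE //.
by apply: eq_bigr => k _; rewrite mxE (ord1 j) mulrC.
Qed.

Lemma C2_on_hessian_continuous {D : set V} {F : V -> R} {x : V} :
  C2_on D F -> D x -> {for x, continuous (hessian F)}.
Proof.
move=> [_ [_ cF]] Dx; apply: (cvg_mx_entries (F := nbhs x)) => i j.
rewrite mxE; under eq_cvg do rewrite mxE.
exact: cF.
Qed.

End gradient.

Section fixed_point.
Context {R : realType} {n : nat}.
Local Notation V := 'cV[R]_(n.+1 + n).

Lemma Gmap_fixed_critical {s : scheme} {D O : set V} {F : V -> R} {x : V} :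
  invertibility s D O F -> O x -> Gmap s F x = x ->
  [/\ grad F x = 0, H11 F x \in unitmx & H22 F x \in unitmx].
Proof.
move=> inv Ox fixed; have [unit11 inv2] := inv _ Ox.
have G1x : G1 F x = usubmx x by rewrite -[in RHS]fixed /Gmap col_mxKu.
have G2x : G2 s F x = dsubmx x by rewrite -[in RHS]fixed /Gmap col_mxKd.
have phix : col_mx (G1 F x) (dsubmx x) = x by rewrite G1x vsubmxK.
have unit22 : H22 F x \in unitmx by move: inv2; case: (s) => // -[_]; rewrite phix.
have gradc0 : gradc F x = 0 := fixed_newton_step0 unit11 G1x.
have gradb0 : gradb F x = 0.
  move: G2x; case: (s) => /=; last by rewrite phix => /(fixed_newton_step0 unit22).
  by rewrite G1x subrr mulmx0 addr0 => /(fixed_newton_step0 unit22).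
split=> //; rewrite -[LHS]vsubmxK.
by rewrite -/(gradc F x) -/(gradb F x) gradc0 gradb0 col_mx0.
Qed.

End fixed_point.

Section block_newton_jacobian.
Context {R : realType} {n : nat}.
Local Notation V := 'cV[R]_(n.+1 + n).
Variables (F : V -> R) (x : V).
Hypotheses (hessian_cont : {for x, continuous (hessian F)})
  (partial_diff : forall i, differentiable (partial i F) x)
  (grad0 : grad F x = 0)
  (unit11 : H11 F x \in unitmx) (unit22 : H22 F x \in unitmx).

Let Hx := hessian F x.
Let dG1 (h : V) := usubmx h - invmx (H11 F x) *m usubmx (Hx *m h).
Let dG2 (h : V) :=
  dsubmx h - invmx (H22 F x) *m (dsubmx (Hx *m h) + H21 F x *m (dG1 h - usubmx h)).

Let dgrad : is_diff x (grad F) (fun h => Hx *m h) := is_diff_grad F x partial_diff.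

Let cont_invH11 : {for x, continuous (fun y => invmx (H11 F y))}.
Proof.
apply: (continuous_comp (f := H11 F)); last exact: continuous_invmx.
exact: continuous_comp hessian_cont (continuous_ulsubmx _).
Qed.

Let cont_H21 : {for x, continuous (H21 F)}.
Proof. exact: continuous_comp hessian_cont (continuous_dlsubmx _). Qed.

Let cont_invH22 : {for x, continuous (fun y => invmx (H22 F y))}.
Proof.
apply: (continuous_comp (f := H22 F)); last exact: continuous_invmx.
exact: continuous_comp hessian_cont (continuous_drsubmx _).
Qed.

Let G1x : G1 F x = usubmx x.
Proof. by rewrite /G1 /gradc grad0 linear0 mulmx0 subr0. Qed.

Lemma is_diff_G1 : is_diff x (G1 F) dG1.
Proof.
have dres : is_diff x (fun y => invmx (H11 F y) *m usubmx (grad F y))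
    (fun h => invmx (H11 F x) *m usubmx (Hx *m h)).
  apply: is_diff_mulmx_vanishing cont_invH11 _ _.
    exact: (is_diff_linear_mx usubmx dgrad).
  by rewrite grad0 linear0.
exact: (is_diffB (is_diff_linear_mx usubmx (is_diff_id x)) dres).
Qed.

Lemma is_diff_G2 s : is_diff x (G2 s F) dG2.
Proof.
have dc : is_diff x (fun y => G1 F y - usubmx y) (fun h => dG1 h - usubmx h).
  exact: (is_diffB is_diff_G1 (is_diff_linear_mx usubmx (is_diff_id x))).
have c0 : G1 F x - usubmx x = 0 by rewrite G1x subrr.
have db := is_diff_linear_mx dsubmx (is_diff_id x).
case: s.
  have dres : is_diff x (fun y => gradb F y + H21 F y *m (G1 F y - usubmx y))
      (fun h => dsubmx (Hx *m h) + H21 F x *m (dG1 h - usubmx h)).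
    exact: (is_diffD (is_diff_linear_mx dsubmx dgrad)
             (is_diff_mulmx_vanishing cont_H21 dc c0)).
  have res0 : gradb F x + H21 F x *m (G1 F x - usubmx x) = 0.
    by rewrite /gradb grad0 linear0 c0 mulmx0 addr0.
  exact: (is_diffB db (is_diff_mulmx_vanishing cont_invH22 dres res0)).
pose phi y := col_mx (G1 F y) (dsubmx y).
have phix : phi x = x by rewrite /phi G1x vsubmxK.
have dphi : is_diff x phi (fun h => col_mx (dG1 h) (dsubmx h)).
  exact: (is_diff_col_mx is_diff_G1 db).
have dgrad_phi : is_diff (phi x) (grad F) (fun h => Hx *m h) by rewrite phix.
have dres := is_diff_linear_mx dsubmx (is_diff_comp dphi dgrad_phi).
have cont_invH22_phi : {for x, continuous (fun y => invmx (H22 F (phi y)))}.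
  apply: (continuous_comp (f := phi) (g := fun z => invmx (H22 F z))).
    exact: differentiable_continuous.
  by rewrite phix.
have res0 : dsubmx (grad F (phi x)) = 0 by rewrite phix grad0 linear0.
apply: (is_diff_eq (is_diffB db (is_diff_mulmx_vanishing cont_invH22_phi dres res0)) _).
apply/funext => h; rewrite /dG2 phix /=; congr (_ - _ *m _).
move: (dG1 h) => a; have hE : Hx *m h = Hx *m col_mx (usubmx h) (dsubmx h).
  by rewrite vsubmxK.
by rewrite hE !dsubmx_mul_col_mx /H21 mulmxBr [RHS]addrAC addrCA subrr addr0.
Qed.

Lemma is_diff_Gmap s :
  is_diff x (Gmap s F) (fun h => h - invmx (Bmat F x) *m (Hx *m h)).
Proof.
apply: (is_diff_eq (is_diff_col_mx is_diff_G1 (is_diff_G2 s)) _).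
apply/funext => h; rewrite /Bmat -[Hx *m h]vsubmxK invmx_block_lower_mul //.
rewrite -[RHS]vsubmxK !linearB /= col_mxKu col_mxKd; congr col_mx.
by rewrite /dG2 /dG1 addrAC subrr add0r mulmxN mulmxBr.
Qed.

End block_newton_jacobian.

Theorem lemma3p2 (R : realType) (n : nat) (s : scheme)
  (D O : set 'cV[R]_(n.+1 + n)) (F : 'cV[R]_(n.+1 + n) -> R)
  (thetas : 'cV[R]_(n.+1 + n)) :
  (1 <= n)%N -> open D -> C2_on D F ->
  open O -> O `<=` D -> invertibility s D O F ->
  O thetas -> Gmap s F thetas = thetas ->
  sym_pos_def (hessian F thetas) ->
  differentiable (Gmap s F) thetas /\
  forall v : 'cV[R]_(n.+1 + n),
    'd (Gmap s F) thetas v =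
    (1%:M - invmx (Bmat F thetas) *m hessian F thetas) *m v.
Proof.
move=> _ _ C2F _ OD inv Ox fixed _; have Dx := OD _ Ox.
have [grad0 unit11 unit22] := Gmap_fixed_critical inv Ox fixed.
have dG := is_diff_Gmap F thetas (C2_on_hessian_continuous C2F Dx)
  (fun i => C2F.2.1 i _ Dx) grad0 unit11 unit22 s.
split=> [|v]; first exact: ex_diff.
by rewrite diff_val mulmxBl mul1mx mulmxA.
Qed.
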